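(* Consider the semidiscrete electroquasistatic system with circuit coupling, in the unknowns $\Phi(t)\in\mathbb{R}^{n_1}$, $v_C(t)\in\mathbb{R}^k$, $i_C(t)\in\mathbb{R}^k$: \begin{align*} Q_s^\top L_\sigma Q_s\Phi+Q_s^\top L_\varepsilon Q_s\tfrac{d}{dt}\Phi+Q_s^\top L_\sigma Y_s v_C+Q_s^\top L_\varepsilon Y_s\tfrac{d}{dt}v_C&=0,\\ Y_s^\top L_\sigma Q_s\Phi+Y_s^\top L_\varepsilon Q_s\tfrac{d}{dt}\Phi+Y_s^\top L_\sigma Y_s v_C+Y_s^\top L_\varepsilon Y_s\tfrac{d}{dt}v_C&=i_C, \end{align*} with internal variable $x_C=\Phi$. Under the assumptions listed in the context, this system is a strongly capacitance-like element.
   Context: Setting (spatial discretization of the electroquasistatic problem $\nabla\cdot\sigma\nabla\phi+\frac{d}{dt}\nabla\cdot\varepsilon\nabla\phi=0$ with homogeneous Dirichlet/Neumann conditions incorporated and terminal voltages $v_C$ prescribed on the contact boundary): $L_\sigma=\widetilde S M_\sigma\widetilde S^\top$ and $L_\varepsilon=\widetilde S M_\varepsilon\widetilde S^\top$ with $\widetilde S\in\mathbb{R}^{N\times m}$ (discrete dual divergence) such that the discrete gradient $G=-\widetilde S^\top$ has full column rank; $M_\varepsilon\in\mathbb{R}^{m\times m}$ is a symmetric positive definite permittivity matrix and $M_\sigma\in\mathbb{R}^{m\times m}$ a symmetric positive semidefinite conductivity matrix. The $N$ nodal degrees of freedom are split into those on the contact boundary and the rest: $Q_s\in\mathbb{R}^{N\times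 n_1}$ and $P_s\in\mathbb{R}^{N\times n_2}$ ($n_1+n_2=N$) are basis matrices of full column rank such that the columns of $Q_s$ and $P_s$ together are the distinct unit vectors of $\mathbb{R}^N$ (columns of $P_s$ for contact-boundary degrees of freedom). The contact boundary consists of $k$ pairwise disjoint terminals; $\Lambda_s\in\mathbb{R}^{n_2\times k}$ has entry $1$ in position $(i,j)$ if contact degree of freedom $i$ belongs to terminal $j$ and $0$ otherwise, and has full column rank; $Y_s=P_s\Lambda_s$. Definitions: a function $F(u,y)$ is strongly monotone with respect to $u$ if there is $c>0$ with $\langle F(u,y)-F(\bar u,y),u-\bar u\rangle\ge c\|u-\bar u\|^2$ for all $y,u,\bar u$. A capacitance-like element is one described by $f_C(\frac{d}{dt}d_C(x_C,i_C,v_C,t),x_C,i_C,v_C,t)=0$ such that at most one differentiation with respect to $t$ is needed to obtain $x_C'=\varphi_C(i_C',x_C,i_C,v_C,t)$, $v_C'=g_C(x_C,i_C,v_C,t)$; it is strongly capacitance-like if additionally $F_C(i_C',x_C,i_C,v_C,t):=\partial_{x_C}g_C(x_C,i_C,v_C,t)\varphi_C(i_C',x_C,i_C,v_C,t)+\partial_{i_C}g_C(x_C,i_C,v_C,t)i_C'$ is continuous and strongly monotone with respect to $i_C'$. *)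

From HB Require Import structures.
From mathcomp Require Import all_boot all_order all_algebra.
From mathcomp Require Import all_classical all_reals all_analysis.
Set Implicit Arguments. Unset Strict Implicit. Unset Printing Implicit Defensive.
Import Order.TTheory GRing.Theory Num.Theory.
Import numFieldNormedType.Exports.
Local Open Scope ring_scope.

Definition cdot (R : realType) (n : nat) (u w : 'cV[R]_n) : R :=
  \sum_(j < n) u j 0 * w j 0.

Definition strongly_monotone (R : realType) (n : nat) (Y : Type)
    (F : 'cV[R]_n -> Y -> 'cV[R]_n) : Prop :=
  exists c : R, 0 < c /\
    forall (y : Y) (u ub : 'cV[R]_n),
      c * cdot (u - ub) (u - ub) <= cdot (F u y - F ub y) (u - ub).

Definition element_solution (R : realType) (nx k md p : nat)
    (fC : 'cV[R]_md -> 'cV[R]_nx -> 'cV[R]_k -> 'cV[R]_k -> R -> 'cV[R]_p)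
    (dC : 'cV[R]_nx -> 'cV[R]_k -> 'cV[R]_k -> R -> 'cV[R]_md)
    (x : R -> 'cV[R]_nx) (i v : R -> 'cV[R]_k) : Prop :=
  (forall t, derivable x t 1) /\ (forall t, derivable i t 1) /\
  (forall t, derivable v t 1) /\
  (forall t, derivable (fun s => dC (x s) (i s) (v s) s) t 1) /\
  (forall t, fC (derive1 (fun s => dC (x s) (i s) (v s) s) t) (x t) (i t) (v t) t = 0).

(* Capacitance-like with witnesses phi_C, g_C: every solution satisfies
   x_C' = phi_C(i_C', x_C, i_C, v_C, t),  v_C' = g_C(x_C, i_C, v_C, t)
   (these relations are obtained from the element equations and at most
   their first time derivative). *)
Definition capacitance_like_with (R : realType) (nx k md p : nat)
    (fC : 'cV[R]_md -> 'cV[R]_nx -> 'cV[R]_k -> 'cV[R]_k -> R -> 'cV[R]_p)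
    (dC : 'cV[R]_nx -> 'cV[R]_k -> 'cV[R]_k -> R -> 'cV[R]_md)
    (phiC : 'cV[R]_k -> 'cV[R]_nx -> 'cV[R]_k -> 'cV[R]_k -> R -> 'cV[R]_nx)
    (gC : 'cV[R]_nx -> 'cV[R]_k -> 'cV[R]_k -> R -> 'cV[R]_k) : Prop :=
  forall (x : R -> 'cV[R]_nx) (i v : R -> 'cV[R]_k),
    element_solution fC dC x i v ->
    forall t, derive1 x t = phiC (derive1 i t) (x t) (i t) (v t) t /\
              derive1 v t = gC (x t) (i t) (v t) t.

Definition capacitance_like (R : realType) (nx k md p : nat)
    (fC : 'cV[R]_md -> 'cV[R]_nx -> 'cV[R]_k -> 'cV[R]_k -> R -> 'cV[R]_p)
    (dC : 'cV[R]_nx -> 'cV[R]_k -> 'cV[R]_k -> R -> 'cV[R]_md) : Prop :=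
  exists phiC gC, capacitance_like_with fC dC phiC gC.

Definition FC_of (R : realType) (nx k : nat)
    (phiC : 'cV[R]_k -> 'cV[R]_nx -> 'cV[R]_k -> 'cV[R]_k -> R -> 'cV[R]_nx)
    (gC : 'cV[R]_nx -> 'cV[R]_k -> 'cV[R]_k -> R -> 'cV[R]_k)
    (di : 'cV[R]_k) (x : 'cV[R]_nx) (i v : 'cV[R]_k) (t : R) : 'cV[R]_k :=
  'd (fun x' => gC x' i v t) x (phiC di x i v t) + 'd (fun i' => gC x i' v t) i di.

Definition strongly_capacitance_like (R : realType) (nx k md p : nat)
    (fC : 'cV[R]_md -> 'cV[R]_nx -> 'cV[R]_k -> 'cV[R]_k -> R -> 'cV[R]_p)
    (dC : 'cV[R]_nx -> 'cV[R]_k -> 'cV[R]_k -> R -> 'cV[R]_md) : Prop :=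
  exists phiC gC,
    capacitance_like_with fC dC phiC gC /\
    (forall x i v t, differentiable (fun x' => gC x' i v t) x /\
                     differentiable (fun i' => gC x i' v t) i) /\
    continuous (fun a : 'cV[R]_k * ('cV[R]_nx * ('cV[R]_k * ('cV[R]_k * R))) =>
                  FC_of phiC gC a.1 a.2.1 a.2.2.1 a.2.2.2.1 a.2.2.2.2) /\
    strongly_monotone (fun (di : 'cV[R]_k) (y : 'cV[R]_nx * ('cV[R]_k * ('cV[R]_k * R))) =>
                  FC_of phiC gC di y.1 y.2.1 y.2.2.1 y.2.2.2).

Definition sym_pos_def (R : realType) (m : nat) (M : 'M[R]_m) : Prop :=
  M^T = M /\ forall u : 'cV[R]_m, u != 0 -> 0 < (u^T *m M *m u) 0 0.
Definition sym_pos_semidef (R : realType) (m : nat) (M : 'M[R]_m) : Prop :=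
  M^T = M /\ forall u : 'cV[R]_m, 0 <= (u^T *m M *m u) 0 0.

Definition eqs_dC (R : realType) (n1 k : nat)
    (x : 'cV[R]_n1) (i v : 'cV[R]_k) (t : R) : 'cV[R]_(n1 + k) := col_mx x v.

Definition eqs_fC (R : realType) (N n1 k : nat)
    (Lsig Leps : 'M[R]_N) (Qs : 'M[R]_(N, n1)) (Ys : 'M[R]_(N, k))
    (d : 'cV[R]_(n1 + k)) (x : 'cV[R]_n1) (i v : 'cV[R]_k) (t : R)
    : 'cV[R]_(n1 + k) :=
  col_mx
    (Qs^T *m Lsig *m Qs *m x + Qs^T *m Leps *m Qs *m usubmx d
       + Qs^T *m Lsig *m Ys *m v + Qs^T *m Leps *m Ys *m dsubmx d)
    (Ys^T *m Lsig *m Qs *m x + Ys^T *m Leps *m Qs *m usubmx d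
       + Ys^T *m Lsig *m Ys *m v + Ys^T *m Leps *m Ys *m dsubmx d - i).

(* Write W = [Q_s Y_s], K = W^T L_eps W and J = W^T L_sig W.  The element
   equations say K (x'; v') + J (x; v) = (0; i).  As M_eps is positive definite
   and S^T and W are injective, K is symmetric positive definite, so (x'; v') is
   an affine function of (x, i, v): no differentiation is needed and phi_C does
   not depend on i'.  Hence F_C(i') - F_C(j') = d_i g_C (i' - j'), where d_i g_C
   is the lower-right block of K^-1, and for e = (0; w) the form of K^-1 is
   bounded below by |e|^2 / (1 + tr K): with z = K^-1 e, Cauchy-Schwarz for the
   form of K gives |K z|^2 <= tr K * z^T K z. *)

From HB Require Import structures.
From mathcomp Require Import all_boot all_order all_algebra.
From mathcomp Require Import all_classical all_reals all_analysis.
From mathcomp Require Import lra.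
Import Order.TTheory GRing.Theory Num.Theory.
Import numFieldNormedType.Exports.
Set Implicit Arguments.
Unset Strict Implicit.
Unset Printing Implicit Defensive.
Local Open Scope ring_scope.

Section KernelTrivial.
Variable F : fieldType.

Lemma mxrank_full_col_mul_eq0 m n p (A : 'M[F]_(m, n)) (u : 'M[F]_(n, p)) :
  \rank A = n -> A *m u = 0 -> u = 0.
Proof.
move=> rkA Au0; apply: trmx_inj; apply/eqP; rewrite trmx0.
have free_At : row_free A^T by rewrite /row_free mxrank_tr rkA.
by rewrite -(mulmx_free_eq0 _ free_At) -trmx_mul Au0 trmx0.
Qed.

Lemma row_mx_mulr_eq0 N n1 n2 k p (Q : 'M[F]_(N, n1)) (P : 'M[F]_(N, n2))
    (L : 'M[F]_(n2, k)) (u : 'M[F]_(n1 + k, p)) :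
  (forall w : 'M[F]_(n1 + n2, p), row_mx Q P *m w = 0 -> w = 0) ->
  (forall w : 'M[F]_(k, p), L *m w = 0 -> w = 0) ->
  row_mx Q (P *m L) *m u = 0 -> u = 0.
Proof.
move=> QP_inj L_inj; rewrite -[u]vsubmxK mul_row_col -mulmxA -mul_row_col.
move=> /QP_inj; rewrite -col_mx0 => /eq_col_mx [-> /L_inj ->]; exact: col_mx0.
Qed.

End KernelTrivial.

Definition sel_mx {R : nzRingType} m p (f : 'I_m -> 'I_p) : 'M[R]_(p, m) :=
  \matrix_(r, c) (r == f c)%:R.

Section SelectionMatrix.
Variables (R : nzRingType) (m p q : nat) (f : 'I_m -> 'I_p).

Lemma sel_mx_mulE (A : 'M[R]_(m, q)) (r : 'I_p) (j : 'I_q) :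
  (sel_mx f *m A) r j = \sum_c (r == f c)%:R * A c j.
Proof. by rewrite mxE; apply: eq_bigr => c _; rewrite mxE. Qed.

Lemma sel_mx_mul_in (A : 'M[R]_(m, q)) (c : 'I_m) (j : 'I_q) :
  injective f -> (sel_mx f *m A) (f c) j = A c j.
Proof.
move=> f_inj; rewrite sel_mx_mulE (bigD1 c) //= eqxx mul1r big1 ?addr0 // => c'.
by rewrite (inj_eq f_inj) eq_sym => /negbTE ->; rewrite mul0r.
Qed.

Lemma sel_mx_mul_out (A : 'M[R]_(m, q)) (r : 'I_p) (j : 'I_q) :
  (forall c, r != f c) -> (sel_mx f *m A) r j = 0.
Proof.
by move=> r_out; rewrite sel_mx_mulE big1 // => c _; rewrite (negbTE (r_out c)) mul0r.
Qed.

End SelectionMatrix.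

Lemma row_sel_mx_mul_eq0 (R : nzRingType) N n1 n2 p
    (fq : 'I_n1 -> 'I_N) (fp : 'I_n2 -> 'I_N) (u : 'M[R]_(n1 + n2, p)) :
  injective fq -> injective fp -> (forall a b, fq a != fp b) ->
  row_mx (sel_mx fq) (sel_mx fp) *m u = 0 -> u = 0.
Proof.
move=> fq_inj fp_inj fq_fp; rewrite -[u]vsubmxK mul_row_col => Wu0.
have entry r j : (sel_mx fq *m usubmx u + sel_mx fp *m dsubmx u) r j = 0.
  by rewrite Wu0 mxE.
have -> : usubmx u = 0.
  apply/matrixP => c j; have := entry (fq c) j.
  by rewrite mxE sel_mx_mul_in // sel_mx_mul_out ?addr0 ?mxE.
have -> : dsubmx u = 0.
  apply/matrixP => c j; have := entry (fp c) j.
  by rewrite mxE sel_mx_mul_in // sel_mx_mul_out ?add0r ?mxE // => c'; rewrite eq_sym.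
exact: col_mx0.
Qed.

Section SymPosDef.
Variables (R : realType) (n : nat) (M : 'M[R]_n).
Hypothesis M_pd : sym_pos_def M.

Lemma sym_pos_def_semidef : sym_pos_semidef M.
Proof.
have [MT M_gt0] := M_pd; split=> // u.
have [->|/M_gt0/ltW //] := eqVneq u 0; by rewrite mulmx0 mxE.
Qed.

Lemma sym_pos_def_unitmx : M \in unitmx.
Proof.
rewrite unitmxE unitfE; apply/negP => /det0P [v v_neq0 vM0].
have vT_neq0 : v^T != 0 by rewrite -(inj_eq trmx_inj) trmxK trmx0.
by have := M_pd.2 _ vT_neq0; rewrite trmxK vM0 mul0mx mxE ltxx.
Qed.

Lemma sym_pos_def_congr m (A : 'M[R]_(n, m)) :
  (forall u : 'cV[R]_m, A *m u = 0 -> u = 0) -> sym_pos_def (A^T *m M *m A).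
Proof.
have [MT M_gt0] := M_pd; move=> A_inj; split.
  by rewrite !trmx_mul trmxK MT mulmxA.
move=> u u_neq0; have: A *m u != 0 by apply: contra u_neq0 => /eqP/A_inj ->.
by move=> /M_gt0; rewrite trmx_mul !mulmxA.
Qed.

End SymPosDef.

Section SymPosSemidef.
Variables (R : realType) (n : nat) (K : 'M[R]_n).
Hypothesis K_psd : sym_pos_semidef K.

Lemma psd_cauchy_schwarz (x y : 'cV[R]_n) :
  (x^T *m K *m y) 0 0 ^+ 2 <= (x^T *m K *m x) 0 0 * (y^T *m K *m y) 0 0.
Proof.
have [KT Kge0] := K_psd.
set a := (x^T *m K *m x) 0 0; set b := (x^T *m K *m y) 0 0.
set c := (y^T *m K *m y) 0 0.
have Kyx : (y^T *m K *m x) 0 0 = b.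
  have -> : (y^T *m K *m x) 0 0 = (y^T *m K *m x)^T 0 0 by rewrite [RHS]mxE.
  by rewrite !trmx_mul trmxK KT mulmxA.
pose p : {poly R} := Poly [:: a; 2 * b; c].
have p_ge0 l : 0 <= p.[l].
  have := Kge0 (x + l *: y).
  have -> : (x + l *: y)^T = x^T + l *: y^T by apply/matrixP => i j; rewrite !mxE.
  have mx00D (A B : 'M[R]_1) : (A + B) 0 0 = A 0 0 + B 0 0 by rewrite mxE.
  have mx00Z (A : 'M[R]_1) : (l *: A) 0 0 = l * A 0 0 by rewrite mxE.
  rewrite !(mulmxDl, mulmxDr) -!scalemxAl -!scalemxAr !(mx00D, mx00Z) -/a -/b -/c Kyx.
  rewrite horner_Poly /=; nra.
have := @deg_le2_poly_delta_ge0 _ p (size_Poly _) _ p_ge0.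
by rewrite !coef_Poly /= => /(_ (Kge0 y)); nra.
Qed.

Lemma psd_mxtrace_ge0 : 0 <= \tr K.
Proof.
have [_ Kge0] := K_psd; apply: sumr_ge0 => j _.
by have := Kge0 (delta_mx j 0); rewrite trmx_delta -rowE -colE !mxE.
Qed.

Lemma psd_sqr_norm_mul_le (z : 'cV[R]_n) :
  ((K *m z)^T *m (K *m z)) 0 0 <= \tr K * (z^T *m K *m z) 0 0.
Proof.
rewrite mxE /mxtrace mulr_suml; apply: ler_sum => j _.
pose e_j : 'cV[R]_n := delta_mx j 0.
have Kz_j : (K *m z) j 0 = (e_j^T *m K *m z) 0 0.
  by rewrite trmx_delta -mulmxA -rowE [RHS]mxE.
have K_jj : K j j = (e_j^T *m K *m e_j) 0 0.
  by rewrite trmx_delta -rowE -colE !mxE.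
by rewrite [_^T 0 j]mxE Kz_j K_jj -expr2 psd_cauchy_schwarz.
Qed.

Lemma psd_invmx_quad_lb (e : 'cV[R]_n) : K \in unitmx ->
  (e^T *m e) 0 0 <= (1 + \tr K) * (e^T *m invmx K *m e) 0 0.
Proof.
move=> K_unit; have [KT Kge0] := K_psd.
pose z := invmx K *m e.
have Kz : K *m z = e by rewrite /z mulKVmx.
have zKz : (z^T *m K *m z) 0 0 = (e^T *m invmx K *m e) 0 0.
  by rewrite -mulmxA Kz /z trmx_mul trmx_inv KT.
rewrite -zKz -[in leLHS]Kz mulrDl mul1r.
have := psd_sqr_norm_mul_le z; have := Kge0 z; lra.
Qed.

End SymPosSemidef.

Lemma continuous_fst {T U : topologicalType} : continuous (@fst T U).
Proof. by move=> ?; exact: cvg_fst. Qed.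

Lemma continuous_snd_comp (T U V : topologicalType) (h : U -> V) :
  continuous h -> continuous (fun a : T * U => h a.2).
Proof. by move=> h_cont a; apply: cvg_comp; [exact: cvg_snd | exact: h_cont]. Qed.

Section MatrixMaps.
Variable R : realType.

Lemma linear_mx_continuous m n p q (f : {linear 'M[R]_(m, n) -> 'M[R]_(p, q)}) :
  continuous f.
Proof.
have fE : f =1 fun M => \sum_i \sum_j M i j *: f (delta_mx i j).
  move=> M; rewrite {1}[M]matrix_sum_delta linear_sum; apply: eq_bigr => i _.
  by rewrite linear_sum; apply: eq_bigr => j _; rewrite linearZ.
rewrite (funext fE); apply: continuous_big => [|i _]; first exact: add_continuous.
apply: continuous_big => [|j _]; first exact: add_continuous.
by move=> M; apply: continuousZr_tmp; exact: coord_continuous.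
Qed.

Lemma mulmx_continuous m n p (A : 'M[R]_(m, n)) :
  continuous (fun x : 'M[R]_(n, p) => A *m x).
Proof. exact: (@linear_mx_continuous n p m p (mulmx A)). Qed.

Lemma continuousD_fun (T : topologicalType) (V : normedModType R) (f g : T -> V) :
  continuous f -> continuous g -> continuous (fun a => f a + g a).
Proof. by move=> f_cont g_cont a; exact: (continuousD (f_cont a) (g_cont a)). Qed.

Lemma continuous_mulmx_comp (T : topologicalType) m n p (A : 'M[R]_(m, n))
    (h : T -> 'M[R]_(n, p)) :
  continuous h -> continuous (fun a => A *m h a).
Proof.
by move=> h_cont a; apply: (continuous_comp (h_cont a)); apply: mulmx_continuous.
Qed.

Lemma mulmx_differentiable m n p (A : 'M[R]_(m, n)) (x : 'M[R]_(n, p)) :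
  differentiable (mulmx A) x.
Proof. by apply: (linear_differentiable (f := mulmx A)); apply: mulmx_continuous. Qed.

Lemma affine_mx_differentiable m n p (A : 'M[R]_(m, n)) (c : 'M[R]_(m, p)) x :
  differentiable (fun y => A *m y + c) x.
Proof.
by apply: differentiableD; [exact: mulmx_differentiable | exact: differentiable_cst].
Qed.

Lemma diff_affine_mx m n p (A : 'M[R]_(m, n)) (c : 'M[R]_(m, p))
    (x y : 'M[R]_(n, p)) :
  'd (fun z => A *m z + c) x y = A *m y.
Proof.
have -> : (fun z => A *m z + c) = mulmx A + cst c by apply/funext.
have := diffD (mulmx_differentiable A x) (differentiable_cst c x).
move=> /(congr1 (fun f => f y)) /= ->.
rewrite -[RHS]addr0; congr (_ + _).
  apply: (congr1 (fun h => h y) (diff_lin (f := mulmx A) x _)); apply: mulmx_continuous.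
exact: (congr1 (fun h => h y) (diff_cst c x)).
Qed.

Lemma derive1_linear_mx m n p q (L : {linear 'M[R]_(m, n) -> 'M[R]_(p, q)})
    (f : R -> 'M[R]_(m, n)) t :
  derivable f t 1 -> derive1 (L \o f) t = L (derive1 f t).
Proof.
have L_cont := linear_mx_continuous (f := L).
move=> /derivable1_diffP df.
have dL : differentiable L (f t) := linear_differentiable _ L_cont.
rewrite derive1E'; last exact: differentiable_comp df dL.
by rewrite derive1E' // diff_comp // /= diff_lin.
Qed.

End MatrixMaps.

Lemma cdotE (R : realType) n (u w : 'cV[R]_n) : cdot u w = (u^T *m w) 0 0.
Proof. by rewrite /cdot [RHS]mxE; apply: eq_bigr => j _; rewrite mxE. Qed.

Section EqsElement.
Variables (R : realType) (N n1 k : nat).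
Variables (Ls Le : 'M[R]_N) (Q : 'M[R]_(N, n1)) (Y : 'M[R]_(N, k)).

Let K := (row_mx Q Y)^T *m Le *m row_mx Q Y.
Let J := (row_mx Q Y)^T *m Ls *m row_mx Q Y.

Lemma eqs_fCE d x i v t :
  eqs_fC Ls Le Q Y d x i v t = K *m d + J *m col_mx x v - col_mx 0 i.
Proof.
rewrite /K /J -[d in RHS](vsubmxK d) tr_row_mx !mul_col_mx !mul_mx_row !mul_row_col.
rewrite opp_col_mx !add_col_mx oppr0 addr0 /eqs_fC.
by congr col_mx; [|congr (_ - _)]; rewrite -addrA addrACA addrC.
Qed.

Hypothesis K_pd : sym_pos_def K.

Let Kinv := invmx K.
Let Rx := - (Kinv *m J *m col_mx 1%:M 0) : 'M[R]_(n1 + k, n1).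
Let Ri := Kinv *m col_mx 0 1%:M : 'M[R]_(n1 + k, k).
Let Rv := - (Kinv *m J *m col_mx 0 1%:M) : 'M[R]_(n1 + k, k).

Lemma eqs_fC_eq0 d x i v t :
  eqs_fC Ls Le Q Y d x i v t = 0 -> d = Rx *m x + Ri *m i + Rv *m v.
Proof.
rewrite eqs_fCE => /eqP; rewrite subr_eq0 => /eqP Kd.
have -> : d = Kinv *m (col_mx 0 i - J *m col_mx x v).
  by rewrite -Kd addrK mulKmx //; exact: sym_pos_def_unitmx.
have -> : col_mx (0 : 'cV[R]_n1) i = col_mx 0 1%:M *m i.
  by rewrite mul_col_mx mul0mx mul1mx.
have -> : col_mx x v = col_mx 1%:M 0 *m x + col_mx 0 1%:M *m v.
  by rewrite !mul_col_mx !mul0mx !mul1mx add_col_mx addr0 add0r.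
rewrite mulmxBr !mulmxDr opprD addrA /Rx /Ri /Rv /J !mulNmx !mulmxA.
by rewrite [in RHS](addrC (- _)).
Qed.

Definition eqs_phi (di : 'cV[R]_k) x i v (t : R) : 'cV[R]_n1 :=
  usubmx (Rx *m x + Ri *m i + Rv *m v).
Definition eqs_g x i v (t : R) : 'cV[R]_k := dsubmx (Rx *m x + Ri *m i + Rv *m v).

Lemma eqs_capacitance_like :
  capacitance_like_with (eqs_fC Ls Le Q Y) (@eqs_dC R n1 k) eqs_phi eqs_g.
Proof.
move=> x i v [_ [_ [_ [dD fC0]]]] t; have := eqs_fC_eq0 (fC0 t); rewrite /eqs_dC.
set D := fun s => col_mx (x s) (v s) => D't.
have x't : derive1 x t = usubmx (derive1 D t).
  rewrite -derive1_linear_mx //; congr derive1.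
  by apply/funext => s; rewrite /= col_mxKu.
have v't : derive1 v t = dsubmx (derive1 D t).
  rewrite -derive1_linear_mx //; congr derive1.
  by apply/funext => s; rewrite /= col_mxKd.
by rewrite x't v't D't.
Qed.

Lemma eqs_g_affine_x i v t :
  (fun x' => eqs_g x' i v t) = fun y => dsubmx Rx *m y + dsubmx (Ri *m i + Rv *m v).
Proof. by apply/funext => y; rewrite /eqs_g -addrA linearD /= mul_dsub_mx. Qed.

Lemma eqs_g_affine_i x v t :
  (fun i' => eqs_g x i' v t) = fun y => dsubmx Ri *m y + dsubmx (Rx *m x + Rv *m v).
Proof. by apply/funext => y; rewrite /eqs_g -addrA addrCA linearD /= mul_dsub_mx. Qed.

Lemma eqs_FCE di x i v t :
  FC_of eqs_phi eqs_g di x i v t =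
  dsubmx Rx *m eqs_phi di x i v t + dsubmx Ri *m di.
Proof. by rewrite /FC_of eqs_g_affine_x eqs_g_affine_i !diff_affine_mx. Qed.

Lemma eqs_FC_continuous :
  continuous (fun a : 'cV[R]_k * ('cV[R]_n1 * ('cV[R]_k * ('cV[R]_k * R))) =>
    FC_of eqs_phi eqs_g a.1 a.2.1 a.2.2.1 a.2.2.2.1 a.2.2.2.2).
Proof.
under eq_fun do rewrite eqs_FCE.
apply: continuousD_fun; apply: continuous_mulmx_comp; last exact: continuous_fst.
move=> a; apply: continuous_comp; last exact: (linear_mx_continuous (f := usubmx)).
move: a; apply: continuousD_fun; first apply: continuousD_fun.
all: apply: continuous_mulmx_comp.
- exact: continuous_snd_comp continuous_fst.
- exact: continuous_snd_comp (continuous_snd_comp continuous_fst).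
- exact: continuous_snd_comp (continuous_snd_comp (continuous_snd_comp continuous_fst)).
Qed.

Lemma eqs_FC_strongly_monotone :
  strongly_monotone
    (fun (di : 'cV[R]_k) (y : 'cV[R]_n1 * ('cV[R]_k * ('cV[R]_k * R))) =>
     FC_of eqs_phi eqs_g di y.1 y.2.1 y.2.2.1 y.2.2.2).
Proof.
have [KT _] := K_pd; have K_psd := sym_pos_def_semidef K_pd.
have trK_gt0 : 0 < 1 + \tr K by have := psd_mxtrace_ge0 K_psd; lra.
exists (1 + \tr K)^-1; split; first by rewrite invr_gt0.
move=> y u ub; rewrite !eqs_FCE opprD addrACA subrr add0r -mulmxBr.
set w := u - ub; pose e := col_mx (0 : 'cV[R]_n1) w.
pose z := Kinv *m e.
have Ri_w : dsubmx Ri *m w = dsubmx z.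
  by rewrite mul_dsub_mx -mulmxA mul_col_mx mul0mx mul1mx.
have zw : (dsubmx z)^T *m w = e^T *m Kinv *m e.
  have -> : (dsubmx z)^T *m w = z^T *m e.
    by rewrite -[z in RHS]vsubmxK tr_col_mx mul_row_col mulmx0 add0r.
  by rewrite /z trmx_mul trmx_inv KT.
have ww : w^T *m w = e^T *m e by rewrite tr_col_mx mul_row_col mulmx0 add0r.
rewrite !cdotE Ri_w zw ww.
have := psd_invmx_quad_lb K_psd e (sym_pos_def_unitmx K_pd).
by rewrite -ler_pdivrMl.
Qed.

Theorem eqs_strongly_capacitance_like :
  strongly_capacitance_like (eqs_fC Ls Le Q Y) (@eqs_dC R n1 k).
Proof.
exists eqs_phi, eqs_g; split; first exact: eqs_capacitance_like.
split; last by split; [exact: eqs_FC_continuous | exact: eqs_FC_strongly_monotone].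
move=> x i v t; rewrite eqs_g_affine_x eqs_g_affine_i.
by split; exact: affine_mx_differentiable.
Qed.

End EqsElement.

Theorem proposition8 (R : realType) (N m n1 n2 k : nat)
    (St : 'M[R]_(N, m)) (Meps Msig : 'M[R]_m)
    (Qs : 'M[R]_(N, n1)) (Ps : 'M[R]_(N, n2)) (Lam : 'M[R]_(n2, k))
    (fq : 'I_n1 -> 'I_N) (fp : 'I_n2 -> 'I_N) (term : 'I_n2 -> 'I_k) :
  (* discrete gradient G = - St^T has full column rank *)
  \rank (- St^T) = N ->
  sym_pos_def Meps ->
  sym_pos_semidef Msig ->
  (* Qs, Ps: their columns together are the distinct unit vectors of R^N *)
  (n1 + n2 = N)%N ->
  injective fq -> injective fp ->
  (forall a b, fq a != fp b) ->
  (forall c : 'I_N, (exists a, fq a = c) \/ (exists b, fp b = c)) ->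
  Qs = \matrix_(r, c) (r == fq c)%:R ->
  Ps = \matrix_(r, c) (r == fp c)%:R ->
  (* Lam: contact dof i belongs to terminal term i; full column rank *)
  Lam = \matrix_(r, c) (term r == c)%:R ->
  \rank Lam = k ->
  strongly_capacitance_like
    (eqs_fC (St *m Msig *m St^T) (St *m Meps *m St^T) Qs (Ps *m Lam))
    (@eqs_dC R n1 k).
Proof.
(* Neither M_sig, nor the dimension count, nor the fact that the two index
   maps cover all nodes is needed. *)
move=> rk_St Meps_pd _ _ fq_inj fp_inj fq_fp _ -> -> _ rk_Lam.
apply: eqs_strongly_capacitance_like.
have St_inj (y : 'cV[R]_N) : St^T *m y = 0 -> y = 0.
  by apply: mxrank_full_col_mul_eq0; rewrite -mxrank_opp.
have W_inj (u : 'cV[R]_(n1 + k)) :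
    row_mx (sel_mx fq) (sel_mx fp *m Lam) *m u = 0 -> u = 0.
  apply: row_mx_mulr_eq0 => [w|w]; first exact: row_sel_mx_mul_eq0.
  exact: mxrank_full_col_mul_eq0.
set W := row_mx _ _.
have -> : W^T *m (St *m Meps *m St^T) *m W = (St^T *m W)^T *m Meps *m (St^T *m W).
  by rewrite trmx_mul trmxK !mulmxA.
by apply: sym_pos_def_congr => // u; rewrite -mulmxA => /St_inj /W_inj.
Qed.
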